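(* Let $R$ be a commutative ring and $n\ge3$. Let $v,w_1,w_2\in R^n$ with $q(v,w_1)=q(v,w_2)=1$. Then $(v,w_1)$ and $(v,w_2)$ lie in the same $EO_{2n}(R)$-orbit and in the same $\operatorname{Epin}_{2n}(R)$-orbit of $H(R^n)$.
   Context: $H(R^n)=R^n\oplus(R^n)^*$ (elements written as pairs $(v,w)$ of row vectors) with quadratic form $q(v,w)=v\cdot w^{\intercal}$ and standard basis $e_1,\dots,e_n,f_1,\dots,f_n$. Let $\partial=(1\ n+1)\cdots(n\ 2n)$ and $E^o_{ij}(\lambda)=I_{2n}+\lambda(e_{ij}-e_{\partial(j)\partial(i)})$ for $1\le i\ne j\le 2n$, $\lambda\in R$; $EO_{2n}(R)$ is the group they generate, acting on $H(R^n)$ via matrices in the ordered basis $(e_1,\dots,e_n,f_1,\dots,f_n)$ (the group is closed under transposition, so row/column conventions give the same orbits). $\mathrm{Cl}=\mathrm{Cl}_0\oplus\mathrm{Cl}_1$ is the Clifford algebra of $(H(R^n),q)$, $x\mapsto x^*$ its canonical involution (identity on $H(R^n)$). $\operatorname{Spin}_{2n}(R)=\{x\in\mathrm{Cl}_0: xx^*=1,\ xH(R^n)x^{-1}=H(R^n)\}$, acting on $H(R^n)$ by $\pi(g)(u)=gug^{-1}$, and $\operatorname{Epin}_{2n}(R)=\pi^{-1}(EO_{2n}(R))$. *)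

From HB Require Import structures.
From mathcomp Require Import all_boot all_order all_algebra.
Set Implicit Arguments. Unset Strict Implicit. Unset Printing Implicit Defensive.
Import Order.TTheory GRing.Theory Num.Theory.
Local Open Scope ring_scope.

Section Hyperbolic.
Variables (R : comPzRingType) (n : nat).

(* H(R^n) = R^n (+) (R^n)^*, an element (v,w) is the row vector row_mx v w,
   written in the ordered basis e_1..e_n,f_1..f_n (indices 'I_(n+n)). *)
Definition hyp := 'rV[R]_(n + n).

Definition qform (h : hyp) : R := (lsubmx h *m (rsubmx h)^T) 0 0.

Definition dd (k : 'I_(n + n)) : 'I_(n + n) :=
  match split k with
  | inl i => rshift n i
  | inr i => lshift n i
  end.

Definition EOgen (i j : 'I_(n + n)) (l : R) : 'M[R]_(n + n) :=
  1%:M + l *: (delta_mx i j - delta_mx (dd j) (dd i)).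

(* EO_{2n}(R): the group generated by the E^o_{ij}(lambda), i <> j.
   Since EOgen i j l * EOgen i j (-l) = 1, this is the monoid they generate. *)
Inductive EO : 'M[R]_(n + n) -> Prop :=
  | EO_one : EO 1%:M
  | EO_step g i j l : i != j -> EO g -> EO (g *m EOgen i j l).

Definition EO_orbit (h1 h2 : hyp) : Prop :=
  exists2 g, EO g & h2 = h1 *m g.

(* ---------- Clifford algebra of (H(R^n), q) ----------
   Chevalley's model: Cl = Lambda(H(R^n)) as an R-module, with basis the
   monomials x_S, S a subset of the basis indices 'I_(n+n) (x_k = e_{k+1} for
   k < n, x_{n+i} = f_{i+1}), and left Clifford multiplication by a basis
   vector x_k given by  x_k . y = x_k /\ y + iota^B_{x_k} y  for the bilinear
   form B with B(f_i,e_i) = 1 and B = 0 on other pairs of basis vectors, so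
   that B(u,u) = q(u).  With this choice the sorted wedge monomial x_S is the
   Clifford product x_{s1} ... x_{sm} (s1 < ... < sm). *)
Definition cl := {ffun {set 'I_(n + n)} -> R}.

Definition Bf (a b : 'I_(n + n)) : R :=
  match split a, split b with
  | inr i, inl j => (i == j)%:R
  | _, _ => 0
  end.

Definition sgnb (T : {set 'I_(n + n)}) (k : 'I_(n + n)) : R :=
  (-1) ^+ #|[set s in T | (s < k)%N]|.

Definition clwedge (k : 'I_(n + n)) (y : cl) : cl :=
  [ffun T : {set 'I_(n + n)} => if k \in T then sgnb T k * y (T :\ k) else 0].

Definition clcontr (k : 'I_(n + n)) (y : cl) : cl :=
  [ffun T : {set 'I_(n + n)} => \sum_(b : 'I_(n + n) | b \notin T) sgnb T b * Bf k b * y (b |: T)].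

Definition clL (k : 'I_(n + n)) (y : cl) : cl :=
  [ffun T : {set 'I_(n + n)} => clwedge k y T + clcontr k y T].

Definition cl1 : cl := [ffun T : {set 'I_(n + n)} => (T == set0)%:R].

Definition clmul (x y : cl) : cl :=
  [ffun T : {set 'I_(n + n)} => \sum_(S : {set 'I_(n + n)}) x S * (foldr clL y (enum S)) T].

Definition clstar (x : cl) : cl :=
  [ffun T : {set 'I_(n + n)} => \sum_(S : {set 'I_(n + n)}) x S * (foldr clL cl1 (rev (enum S))) T].

Definition iota (h : hyp) : cl :=
  [ffun T : {set 'I_(n + n)} => \sum_(k : 'I_(n + n)) h 0 k * (T == [set k])%:R].

Definition cl_even (x : cl) : Prop := forall S : {set 'I_(n + n)}, odd #|S| -> x S = 0.

Definition cl_inverse (x y : cl) : Prop := clmul x y = cl1 /\ clmul y x = cl1.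

(* Spin_{2n}(R) together with a (two-sided) inverse xi of x *)
Definition spin_with_inv (x xi : cl) : Prop :=
  [/\ cl_even x, clmul x (clstar x) = cl1, cl_inverse x xi,
      (forall h, exists h', clmul (clmul x (iota h)) xi = iota h')
    & (forall h', exists h, clmul (clmul x (iota h)) xi = iota h')].

(* Epin_{2n}(R) = pi^{-1}(EO_{2n}(R)), pi(x)(u) = x u x^{-1} *)
Definition Epin_with_inv (x xi : cl) : Prop :=
  spin_with_inv x xi /\
  exists2 M, EO M & forall h, clmul (clmul x (iota h)) xi = iota (h *m M).

Definition Epin_orbit (h1 h2 : hyp) : Prop :=
  exists x xi, Epin_with_inv x xi /\ clmul (clmul x (iota h1)) xi = iota h2.

End Hyperbolic.

(* Put u := w2 - w1, so that q(v,u) = 0.  The vectors P = (0,u) and Q = (0,w1)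
   span a totally isotropic plane, hence in the Clifford algebra P^2 = Q^2 = 0
   and PQ = -QP.  Therefore x = 1 + PQ is even, x^-1 = 1 - PQ = x^*, and
   conjugation by x is the Eichler transformation
     h |-> h + B(Q,h) P - B(P,h) Q,
   whose matrix is [[1, w1^T u - u^T w1], [0, 1]].  As w1^T u - u^T w1 is
   alternating, this matrix is a product of generators E^o_{i,n+j}(c), and it
   maps (v,w1) to (v, w1 + q(v,w1) u - q(v,u) w1) = (v,w2). *)

From Pilot Require Import Defs.
From HB Require Import structures.
From mathcomp Require Import all_boot all_order all_algebra.
From mathcomp Require Import ring.
Import Order.TTheory GRing.Theory Num.Theory.
Local Open Scope ring_scope.
Set Implicit Arguments. Unset Strict Implicit. Unset Printing Implicit Defensive.

Lemma sorted_enum_ord m (A : {set 'I_m}) :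
  sorted (fun x y : 'I_m => (x < y)%N) (enum A).
Proof.
rewrite /enum_mem -enumT; apply: sorted_filter; first exact: ltn_trans.
by have := iota_ltn_sorted 0 m; rewrite -val_enum_ord sorted_map.
Qed.

Lemma enum_setU1_min m (t : 'I_m) (T : {set 'I_m}) :
  (forall s, s \in T -> (t < s)%N) -> enum (t |: T) = t :: enum T.
Proof.
move=> tT; apply: (@irr_sorted_eq _ (fun x y : 'I_m => (x < y)%N)).
- exact: ltn_trans.
- by move=> x /=; rewrite ltnn.
- exact: sorted_enum_ord.
- rewrite /= path_sortedE; last exact: ltn_trans.
  by rewrite sorted_enum_ord andbT; apply/allP=> s; rewrite mem_enum; apply: tT.
- by move=> x; rewrite in_cons !mem_enum in_setU1.
Qed.

Lemma sum_ord_pairs (V : zmodType) m (F : 'I_m -> 'I_m -> V) :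
  \sum_i \sum_j F i j = \sum_i (F i i + \sum_(j : 'I_m | (i < j)%N) (F i j + F j i)).
Proof.
have split_row i : \sum_j F i j =
    F i i + (\sum_(j : 'I_m | (i < j)%N) F i j + \sum_(j : 'I_m | (j < i)%N) F i j).
  rewrite (bigD1 i) //= (bigID (fun j : 'I_m => (i < j)%N)) /=.
  by congr (_ + (_ + _)); apply: eq_bigl => j; rewrite -val_eqE /=; case: ltngtP.
rewrite (eq_bigr _ (fun i _ => split_row i)).
under [RHS]eq_bigr do rewrite big_split.
rewrite !big_split /=; congr (_ + (_ + _)).
by rewrite (exchange_big_dep xpredT).
Qed.

Lemma setU1D1 (T : finType) (A : {set T}) a b :
  b != a -> (b |: A) :\ a = b |: (A :\ a).
Proof.
move=> ba; apply/setP=> x; rewrite !inE.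
by case: (eqVneq x b) => [->|] //=; rewrite ba.
Qed.

HB.instance Definition _ (R : comPzRingType) (n : nat) :=
  GRing.Zmodule.copy (cl R n) {ffun {set 'I_(n + n)} -> R}.

Definition clscale (R : comPzRingType) (n : nat) (c : R) (y : cl R n) : cl R n :=
  [ffun T => c * y T].

Fact clscale_lmod_mixin (R : comPzRingType) (n : nat) :
  GRing.Zmodule_isLmodule R (cl R n).
Proof.
apply: (@GRing.Zmodule_isLmodule.Build _ _ (@clscale R n)) => [a b y|y|a y z|y a b];
  by apply/ffunP=> T; rewrite !ffunE ?mulrA ?mul1r ?mulrDr ?mulrDl.
Defined.

HB.instance Definition _ (R : comPzRingType) (n : nat) := clscale_lmod_mixin R n.

Section Clifford.
Variables (R : comPzRingType) (n : nat).
Local Notation I := 'I_(n + n).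
Local Notation cl := (cl R n).
Local Notation sgn := (sgnb R).
Local Notation B := (Bf R).

Definition sgn_lt (a b : I) : R := if (a < b)%N then -1 else 1.

Lemma sgnbU1 (T : {set I}) a b :
  a \notin T -> sgn (a |: T) b = sgn_lt a b * sgn T b.
Proof.
move=> aT; rewrite /sgnb /sgn_lt.
have -> : [set s in a |: T | (s < b)%N] =
          (if (a < b)%N then a |: [set s in T | (s < b)%N] else [set s in T | (s < b)%N]).
  apply/setP=> s; case: ifP => ab; rewrite !inE;
    by case: (eqVneq s a) => [->|] //=; rewrite ab ?(negPf aT).
by case: ifP; rewrite ?mul1r // cardsU1 inE (negPf aT) exprS.
Qed.

Lemma sgn_lt_sqr a b : sgn_lt a b * sgn_lt a b = 1.
Proof. by rewrite /sgn_lt; case: ifP; rewrite ?mulrNN mulr1. Qed.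

Lemma sgnbD1 (T : {set I}) a b :
  a \in T -> sgn (T :\ a) b = sgn_lt a b * sgn T b.
Proof.
by move=> aT; rewrite -{2}(setD1K aT) sgnbU1 ?setD11 // mulrA sgn_lt_sqr mul1r.
Qed.

Lemma sgnb_sqr (T : {set I}) a : sgn T a * sgn T a = 1.
Proof. by rewrite /sgnb -exprD -signr_odd oddD addbb. Qed.

Lemma sgnb_min (T : {set I}) (a : I) : (forall s, s \in T -> (a < s)%N) -> sgn T a = 1.
Proof.
move=> aT; rewrite /sgnb (_ : [set s in T | (s < a)%N] = set0) ?cards0 //.
apply/setP=> s; rewrite !inE; apply/negP=> /andP[/aT as_ sa].
by move: (ltn_trans as_ sa); rewrite ltnn.
Qed.

Lemma sgn_lt_refl a : sgn_lt a a = 1.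
Proof. by rewrite /sgn_lt ltnn. Qed.

Lemma sgn_lt_anti a b : a != b -> sgn_lt a b + sgn_lt b a = 0.
Proof.
rewrite /sgn_lt; case: (ltngtP a b) => [_ _|_ _|/val_inj->]; rewrite ?eqxx //.
- exact: addNr.
- exact: subrr.
Qed.

Lemma Bf_diag (a : I) : B a a = 0.
Proof. by rewrite /Bf; case: (split a). Qed.

Lemma Bf_lt (a c : I) : (a < c)%N -> B a c = 0.
Proof.
rewrite /Bf; case: splitP => i -> //; case: splitP => j -> //=.
by move=> lt; have := ltn_trans lt (ltn_ord j); rewrite ltnNge leq_addr.
Qed.

Lemma Bf_mul_neq (a c d : I) : c != d -> B a c * B a d = 0.
Proof.
move=> cd; rewrite /Bf; case: (split a) => i; first by rewrite mul0r.
case Ec: (split c) => [j|j]; case Ed: (split d) => [k|k]; rewrite ?mul0r ?mulr0 //.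
case: eqP => [ij|]; case: eqP => [ik|]; rewrite ?mul0r ?mulr0 //.
by move: cd; rewrite -(splitK c) -(splitK d) Ec Ed -ij -ik eqxx.
Qed.

Local Notation wedge := (@clwedge R n).
Local Notation contr := (@clcontr R n).
Local Notation mulL := (@clL R n).

Lemma clscaleE c (y : cl) T : (c *: y) T = c * y T.
Proof. exact: ffunE. Qed.

Lemma clwedge_is_linear k : linear (wedge k).
Proof.
move=> c y z; apply/ffunP=> T; rewrite !(clscaleE, ffunE).
by case: ifP; rewrite ?mulr0 ?addr0 // mulrDr mulrCA.
Qed.

HB.instance Definition _ k :=
  GRing.isLinear.Build R cl cl *:%R (wedge k) (clwedge_is_linear k).

Lemma clcontr_is_linear k : linear (contr k).
Proof.
move=> c y z; apply/ffunP=> T; rewrite !(clscaleE, ffunE) mulr_sumr -big_split.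
by apply: eq_bigr => b _; rewrite !(clscaleE, ffunE) mulrDr mulrCA.
Qed.

HB.instance Definition _ k :=
  GRing.isLinear.Build R cl cl *:%R (contr k) (clcontr_is_linear k).

Lemma clLE k (y : cl) : mulL k y = wedge k y + contr k y.
Proof. by apply/ffunP=> T; rewrite !ffunE. Qed.

Lemma clL_is_linear k : linear (mulL k).
Proof. by move=> c y z; rewrite !clLE !linearP addrACA scalerDr. Qed.

HB.instance Definition _ k :=
  GRing.isLinear.Build R cl cl *:%R (mulL k) (clL_is_linear k).

Lemma clwedge_anticomm a b (y : cl) :
  wedge a (wedge b y) + wedge b (wedge a y) = 0.
Proof.
apply/ffunP=> T; rewrite !ffunE; case: (eqVneq a b) => [<-|ab].
  by case: ifP; rewrite ?setD11 ?mulr0 ?addr0.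
case aT: (a \in T); case bT: (b \in T);
  rewrite ?in_setD1 ?aT ?bT ?(eq_sym b) ?ab /= ?mulr0 ?addr0 //.
rewrite !sgnbD1 // (setDDl T [set b]) setUC -setDDl.
transitivity ((sgn_lt a b + sgn_lt b a) * (sgn T a * sgn T b * y (T :\ a :\ b))).
  by ring.
by rewrite sgn_lt_anti // mul0r.
Qed.

Lemma clwedge_sqr a (y : cl) : wedge a (wedge a y) = 0.
Proof. by apply/ffunP=> T; rewrite !ffunE; case: ifP; rewrite ?setD11 ?mulr0. Qed.

Lemma clcontr2E a b (y : cl) T : contr a (contr b y) T =
  \sum_c \sum_d (if (c \in T) || (d \in c |: T) then 0 else
     sgn T c * sgn (c |: T) d * B a c * B b d * y (d |: (c |: T))).
Proof.
rewrite ffunE big_mkcond; apply: eq_bigr => c _ /=.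
case: (c \in T) => /=; first by rewrite big1.
rewrite ffunE big_mkcond mulr_sumr; apply: eq_bigr => d _ /=.
by case: (d \in c |: T); rewrite /= ?mulr0 //; ring.
Qed.

Lemma clcontr_anticomm a b (y : cl) :
  contr a (contr b y) + contr b (contr a y) = 0.
Proof.
apply/ffunP=> T; rewrite ffunE !clcontr2E [X in _ + X]exchange_big ffunE.
rewrite -big_split big1 //= => c _; rewrite -big_split big1 //= => d _.
case cT: (c \in T); case dT: (d \in T); rewrite !in_setU1 ?cT ?dT ?orbT /= ?addr0 //.
case: (eqVneq d c) => [->|dc] /=; first by rewrite addr0.
rewrite !sgnbU1 ?cT ?dT // setUCA.
transitivity ((sgn_lt c d + sgn_lt d c) *
  (sgn T c * sgn T d * B a c * B b d * y (c |: (d |: T)))); first by ring.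
by rewrite sgn_lt_anti ?mul0r // eq_sym.
Qed.

Lemma clcontr_sqr a (y : cl) : contr a (contr a y) = 0.
Proof.
apply/ffunP=> T; rewrite clcontr2E ffunE big1 //= => c _; rewrite big1 //= => d _.
case: ifP => // /norP[_]; rewrite in_setU1 => /norP[dc _].
transitivity (B a c * B a d * (sgn T c * sgn (c |: T) d * y (d |: (c |: T)))).
  by ring.
by rewrite Bf_mul_neq ?mul0r // eq_sym.
Qed.

Lemma clwedge_contr a b (y : cl) :
  wedge a (contr b y) + contr b (wedge a y) = B b a *: y.
Proof.
apply/ffunP=> T; rewrite !(clscaleE, ffunE).
under [X in _ + X = _]eq_bigr => c _ do rewrite ffunE.
case: (boolP (a \in T)) => aT; last first.
  rewrite add0r (bigD1 a) //= setU11 sgnbU1 // sgn_lt_refl mul1r setU1K //.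
  rewrite big1 => [|c /andP[_ ca]]; last first.
    by rewrite in_setU1 eq_sym (negPf ca) (negPf aT) /= mulr0.
  by rewrite addr0 mulrACA sgnb_sqr mul1r.
rewrite [X in sgn T a * X](bigD1 a) ?setD11 //= sgnbD1 // sgn_lt_refl mul1r.
rewrite setD1K // mulrDr !mulrA sgnb_sqr mul1r -addrA -[RHS]addr0; congr (_ + _).
have notinTa c : (c \notin T :\ a) && (c != a) = (c \notin T).
  by rewrite in_setD1; case: (eqVneq c a) => [->|] /=; rewrite ?aT ?andbT.
rewrite (eq_bigl _ _ notinTa) mulr_sumr -big_split big1 //= => c cT.
have ca : c != a by apply: contraNneq cT => ->.
rewrite in_setU1 aT orbT sgnbD1 // sgnbU1 // setU1D1 //.
transitivity ((sgn_lt a c + sgn_lt c a) *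
  (sgn T a * sgn T c * B b c * y (c |: (T :\ a)))); first by ring.
by rewrite sgn_lt_anti ?mul0r // eq_sym.
Qed.

Lemma clL_anticomm a b (y : cl) :
  mulL a (mulL b y) + mulL b (mulL a y) = (B a b + B b a) *: y.
Proof.
rewrite !clLE !linearD /= (AC ((2*2)*(2*2)) (((1*5)*(4*8))*((2*7)*(6*3)))) /=.
by rewrite clwedge_anticomm clcontr_anticomm !clwedge_contr !add0r scalerDl addrC.
Qed.

Lemma clL_swap a b (y : cl) :
  mulL a (mulL b y) = (B a b + B b a) *: y - mulL b (mulL a y).
Proof. by rewrite -clL_anticomm addrK. Qed.

Lemma clL_sqr a (y : cl) : mulL a (mulL a y) = 0.
Proof.
rewrite !clLE !linearD /= clwedge_sqr clcontr_sqr add0r addr0.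
by rewrite clwedge_contr Bf_diag scale0r.
Qed.

(** * The Clifford product *)

Definition clbasis (S : {set I}) : cl := [ffun T => (T == S)%:R].

Lemma cl1_basis : cl1 R n = clbasis set0.
Proof. by apply/ffunP=> T; rewrite !ffunE. Qed.

Lemma cl_decomp (z : cl) : z = \sum_S z S *: clbasis S.
Proof.
apply/ffunP=> T; rewrite sum_ffunE (bigD1 T) //= big1 => [|S /negPf nS].
  by rewrite clscaleE ffunE eqxx mulr1 addr0.
by rewrite clscaleE ffunE eq_sym nS mulr0.
Qed.

Lemma clmulDl (x1 x2 y : cl) : clmul (x1 + x2) y = clmul x1 y + clmul x2 y.
Proof.
apply/ffunP=> T; rewrite !ffunE -big_split; apply: eq_bigr => S _.
by rewrite ffunE mulrDl.
Qed.

Lemma clmulZl c (x y : cl) : clmul (c *: x) y = c *: clmul x y.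
Proof.
apply/ffunP=> T; rewrite clscaleE !ffunE mulr_sumr; apply: eq_bigr => S _.
by rewrite clscaleE mulrA.
Qed.

Lemma clmul0l (y : cl) : clmul 0 y = 0.
Proof. by apply/ffunP=> T; rewrite !ffunE big1 // => S _; rewrite ffunE mul0r. Qed.

Lemma clmulNl (x y : cl) : clmul (- x) y = - clmul x y.
Proof. by rewrite -scaleN1r clmulZl scaleN1r. Qed.

Lemma clmul_suml (J : Type) (r : seq J) (P : pred J) (F : J -> cl) y :
  clmul (\sum_(j <- r | P j) F j) y = \sum_(j <- r | P j) clmul (F j) y.
Proof. exact: (big_morph (fun x => clmul x y) (fun x1 x2 => clmulDl x1 x2 y) (clmul0l y)). Qed.

Lemma clmul_basis S (y : cl) : clmul (clbasis S) y = foldr mulL y (enum S).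
Proof.
apply/ffunP=> T; rewrite ffunE (bigD1 S) //= big1 => [|S' /negPf nS].
  by rewrite ffunE eqxx mul1r addr0.
by rewrite ffunE nS mul0r.
Qed.

Lemma clmul1l (y : cl) : clmul (cl1 R n) y = y.
Proof. by rewrite cl1_basis clmul_basis enum_set0. Qed.

Lemma clL_basis_min (t : I) (S : {set I}) : (forall s, s \in S -> (t < s)%N) ->
  mulL t (clbasis S) = clbasis (t |: S).
Proof.
move=> tS; have tNS : t \notin S by apply/negP=> /tS; rewrite ltnn.
apply/ffunP=> U; rewrite clLE !ffunE big1 => [|c cU]; last first.
  rewrite ffunE; case: (eqVneq (c |: U) S) => [cUS|]; last by rewrite mulr0.
  by rewrite Bf_lt ?mulr0 ?mul0r // tS // -cUS setU11.
rewrite addr0; case: (eqVneq U (t |: S)) => [->|nU].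
  by rewrite setU11 setU1K // sgnbU1 // sgn_lt_refl mul1r sgnb_min // eqxx mulr1.
case: ifP => // tU; case: (eqVneq (U :\ t) S) => [US|]; last by rewrite mulr0.
by move: nU; rewrite -US setD1K // eqxx.
Qed.

Lemma clL1 k : mulL k (cl1 R n) = clbasis [set k].
Proof. by rewrite cl1_basis clL_basis_min ?setU0 // => s; rewrite inE. Qed.

Lemma clL_basis_supp k (T S : {set I}) :
  mulL k (clbasis T) S != 0 -> S \subset k |: T.
Proof.
apply: contraR => kTS; apply/eqP; rewrite clLE !ffunE big1 => [|c cS]; last first.
  rewrite ffunE; case: (eqVneq (c |: S) T) => [cST|]; last by rewrite mulr0.
  by case/negP: kTS; rewrite -cST; apply/subsetP=> x xS; rewrite !in_setU1 xS !orbT.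
rewrite addr0; case: ifP => // kS; case: (eqVneq (S :\ k) T) => [SkT|]; last by rewrite mulr0.
by case/negP: kTS; rewrite -SkT setD1K.
Qed.

Lemma clmul_clL_low (t : I) (z y : cl) :
  (forall S, z S != 0 -> forall s, s \in S -> (t < s)%N) ->
  clmul (mulL t z) y = mulL t (clmul z y).
Proof.
move=> zt; rewrite [in LHS](cl_decomp z) [in RHS](cl_decomp z).
rewrite linear_sum !clmul_suml linear_sum; apply: eq_bigr => S _.
rewrite linearZ !clmulZl linearZ /=.
have [->|/zt tS] := eqVneq (z S) 0; first by rewrite !scale0r.
by rewrite clL_basis_min // !clmul_basis enum_setU1_min.
Qed.

Lemma clmul_clL_basis k (T : {set I}) (y : cl) :
  clmul (mulL k (clbasis T)) y = mulL k (clmul (clbasis T) y).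
Proof.
(* Induction on #|T|: if k is below every element of T, x_k x_T is the sorted
   monomial x_(k |: T); otherwise anticommute x_k past the least element t. *)
elim: {T}#|T|.+1 {-2}T (ltnSn #|T|) k => // m IH T HT k.
case: (pickP [pred s in T | (s <= k)%N]) => [s0 /andP[s0T s0k] | k_min]; last first.
  have kT s : s \in T -> (k < s)%N.
    by move=> sT; move: (k_min s); rewrite /= sT /= ltnNge => ->.
  by rewrite clL_basis_min // !clmul_basis enum_setU1_min.
case: (@arg_minnP _ _ (fun s => s \in T) val s0T) => t tT t_min.
have t_lt s : s \in T :\ t -> (t < s)%N.
  by rewrite in_setD1 ltn_neqAle => /andP[st /t_min ->]; rewrite andbT eq_sym.
have ET : clbasis T = mulL t (clbasis (T :\ t)) by rewrite clL_basis_min // setD1K.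
have enumT : enum T = t :: enum (T :\ t) by rewrite -{1}(setD1K tT) enum_setU1_min.
rewrite [in RHS]clmul_basis enumT /= -clmul_basis ET.
have [->|kt] := eqVneq k t; first by rewrite !clL_sqr clmul0l.
have tk : (t < k)%N by rewrite ltn_neqAle (leq_trans (t_min _ s0T) s0k) andbT eq_sym.
have ltT : (#|T :\ t| < m)%N by move: HT; rewrite (cardsD1 t T) tT.
rewrite clL_swap clmulDl clmulNl clmulZl clmul_clL_low; last first.
  by move=> S /clL_basis_supp /subsetP kS s /kS; rewrite in_setU1 => /predU1P[->|/t_lt].
by rewrite IH // [RHS]clL_swap.
Qed.

Lemma clmul_clL k (z y : cl) : clmul (mulL k z) y = mulL k (clmul z y).
Proof.
rewrite [in LHS](cl_decomp z) [in RHS](cl_decomp z).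
rewrite linear_sum !clmul_suml linear_sum; apply: eq_bigr => S _.
by rewrite linearZ !clmulZl linearZ /= clmul_clL_basis.
Qed.

Local Notation V := 'rV[R]_(n + n).
Local Notation iota := (@Defs.iota R n).

Definition clLv (a : V) (y : cl) : cl := \sum_k a 0 k *: mulL k y.

Lemma clLv_is_linear (a : V) : linear (clLv a).
Proof.
move=> c y z; rewrite /clLv scaler_sumr -big_split /=; apply: eq_bigr => k _.
by rewrite linearP scalerDr !scalerA mulrC.
Qed.

HB.instance Definition _ a :=
  GRing.isLinear.Build R cl cl *:%R (clLv a) (clLv_is_linear a).

Lemma clLvD (a b : V) (y : cl) : clLv (a + b) y = clLv a y + clLv b y.
Proof. by rewrite /clLv -big_split; apply: eq_bigr => k _; rewrite mxE scalerDl. Qed.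

Lemma clLvZ c (a : V) (y : cl) : clLv (c *: a) y = c *: clLv a y.
Proof. by rewrite /clLv scaler_sumr; apply: eq_bigr => k _; rewrite mxE scalerA. Qed.

Lemma clLvN (a : V) (y : cl) : clLv (- a) y = - clLv a y.
Proof. by rewrite -scaleN1r clLvZ scaleN1r. Qed.

Lemma clmul_clLv (a : V) (z y : cl) : clmul (clLv a z) y = clLv a (clmul z y).
Proof.
rewrite clmul_suml; apply: eq_bigr => k _.
by rewrite clmulZl clmul_clL.
Qed.

Lemma iota_clLv (a : V) : iota a = clLv a (cl1 R n).
Proof.
apply/ffunP=> T; rewrite !ffunE sum_ffunE; apply: eq_bigr => k _.
by rewrite clscaleE clL1 ffunE.
Qed.

Lemma qform_Bf (a : V) : qform a = \sum_i \sum_j a 0 i * a 0 j * B i j.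
Proof.
rewrite /qform mxE big_split_ord /= [X in _ = X + _]big1 ?add0r => [|i _]; last first.
  by rewrite big1 // => j _; rewrite /Bf (unsplitK (inl i)) mulr0.
apply: eq_bigr => k _; rewrite big_split_ord /= [X in _ = _ + X]big1 ?addr0 => [|j _].
  rewrite (bigD1 k) //= big1 ?addr0 => [|j jk].
    by rewrite /Bf (unsplitK (inr k)) (unsplitK (inl k)) eqxx mulr1 !mxE mulrC.
  by rewrite /Bf (unsplitK (inr k)) (unsplitK (inl j)) eq_sym (negPf jk) mulr0.
by rewrite /Bf (unsplitK (inr k)) (unsplitK (inr j)) mulr0.
Qed.

Lemma clLv2E (a b : V) (y : cl) :
  clLv a (clLv b y) = \sum_i \sum_j (a 0 i * b 0 j) *: mulL i (mulL j y).
Proof.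
rewrite {1}/clLv; apply: eq_bigr => i _; rewrite linear_sum scaler_sumr.
by apply: eq_bigr => j _; rewrite linearZ scalerA.
Qed.

Lemma clLv_sqr (a : V) (y : cl) : clLv a (clLv a y) = qform a *: y.
Proof.
rewrite clLv2E sum_ord_pairs qform_Bf sum_ord_pairs scaler_suml; apply: eq_bigr => i _.
rewrite clL_sqr scaler0 add0r Bf_diag mulr0 add0r scaler_suml; apply: eq_bigr => j _.
rewrite [a 0 j * a 0 i]mulrC -scalerDr clL_anticomm scalerA.
by congr (_ *: _); ring.
Qed.

Definition qpolar (a b : V) : R := qform (a + b) - qform a - qform b.

Lemma qpolarC (a b : V) : qpolar a b = qpolar b a.
Proof. by rewrite /qpolar [a + b]addrC addrAC. Qed.

Lemma clLv_anticomm (a b : V) (y : cl) :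
  clLv a (clLv b y) + clLv b (clLv a y) = qpolar a b *: y.
Proof.
apply/eqP; rewrite /qpolar !scalerBl eq_sym !subr_eq -(clLv_sqr (a + b)).
by rewrite !clLvD !linearD /= !clLv_sqr (AC (2*2) (2*3*4*1)) /=.
Qed.

Lemma clLv_swap (a b : V) (y : cl) :
  clLv a (clLv b y) = qpolar a b *: y - clLv b (clLv a y).
Proof. by rewrite -clLv_anticomm addrK. Qed.

Lemma clL_parity k (y : cl) b : (forall S : {set I}, odd #|S| = b -> y S = 0) ->
  forall S : {set I}, odd #|S| = ~~ b -> mulL k y S = 0.
Proof.
move=> yb S Sb; rewrite clLE !ffunE big1 ?addr0 => [|c cS].
  case: ifP => // kS; rewrite yb ?mulr0 //.
  by move: Sb; rewrite (cardsD1 k S) kS oddD addTb => /negb_inj.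
by rewrite yb ?mulr0 // cardsU1 cS oddD Sb /= negbK.
Qed.

Lemma clLv_parity (a : V) (y : cl) b :
  (forall S : {set I}, odd #|S| = b -> y S = 0) ->
  forall S : {set I}, odd #|S| = ~~ b -> clLv a y S = 0.
Proof.
move=> yb S Sb; rewrite sum_ffunE big1 // => k _.
by rewrite clscaleE (clL_parity k yb) ?mulr0.
Qed.

Lemma clstar_is_linear : linear (@clstar R n).
Proof.
move=> c x z; apply/ffunP=> T; rewrite !(clscaleE, ffunE) mulr_sumr -big_split.
by apply: eq_bigr => S _; rewrite !(clscaleE, ffunE) mulrDl mulrA.
Qed.

HB.instance Definition _ :=
  GRing.isLinear.Build R cl cl *:%R (@clstar R n) clstar_is_linear.

Lemma clstar_basis (S : {set I}) : clstar (clbasis S) = foldr mulL (cl1 R n) (rev (enum S)).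
Proof.
apply/ffunP=> T; rewrite ffunE (bigD1 S) //= big1 => [|S' /negPf nS].
  by rewrite ffunE eqxx mul1r addr0.
by rewrite ffunE nS mul0r.
Qed.

Lemma clstar1 : clstar (cl1 R n) = cl1 R n.
Proof. by rewrite {1}cl1_basis clstar_basis enum_set0. Qed.

Lemma clstar_clL2 (i j : I) : clstar (mulL i (mulL j (cl1 R n))) = mulL j (mulL i (cl1 R n)).
Proof.
wlog ij : i j / (i < j)%N => [hyp|].
  case: (ltngtP i j) => [/hyp //|ji|/val_inj->]; last by rewrite clL_sqr linear0.
  by rewrite clL_swap linearB linearZ /= clstar1 hyp // [RHS]clL_swap [Bf _ j i + _]addrC.
have j_min s : s \in [set j] -> (i < s)%N by rewrite inE => /eqP->.
by rewrite clL1 clL_basis_min // clstar_basis enum_setU1_min // enum_set1.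
Qed.

Lemma clstar_clLv2 (a b : V) :
  clstar (clLv a (clLv b (cl1 R n))) = clLv b (clLv a (cl1 R n)).
Proof.
rewrite !clLv2E linear_sum exchange_big; apply: eq_bigr => j _.
rewrite linear_sum; apply: eq_bigr => i _.
by rewrite linearZ /= clstar_clL2 mulrC.
Qed.

End Clifford.

(** * Eichler elements and Eichler transformations *)

Section EichlerElement.
Variables (R : comPzRingType) (n : nat) (P Q : 'rV[R]_(n + n)).
Hypotheses (qP : qform P = 0) (qQ : qform Q = 0) (qPQ : qpolar P Q = 0).
Local Notation cl := (cl R n).
Local Notation iota := (@Defs.iota R n).
Local Notation one := (cl1 R n).
Local Notation N := (clLv P (clLv Q one)).

Definition eichler : cl := one + N.
Definition eichler_inv : cl := one - N.

Lemma clLvPP (y : cl) : clLv P (clLv P y) = 0.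
Proof. by rewrite clLv_sqr qP scale0r. Qed.

Lemma clLvQQ (y : cl) : clLv Q (clLv Q y) = 0.
Proof. by rewrite clLv_sqr qQ scale0r. Qed.

Lemma clLvQP (y : cl) : clLv Q (clLv P y) = - clLv P (clLv Q y).
Proof. by rewrite clLv_swap qpolarC qPQ scale0r sub0r. Qed.

Lemma clLvPQ_eichler_inv : clLv P (clLv Q eichler_inv) = N.
Proof. by rewrite /eichler_inv !linearB /= clLvQP clLvQQ !(linear0, oppr0) addr0. Qed.

Lemma eichlerK : clmul eichler eichler_inv = one.
Proof.
by rewrite clmulDl clmul1l !clmul_clLv clmul1l clLvPQ_eichler_inv subrK.
Qed.

Lemma eichler_invK : clmul eichler_inv eichler = one.
Proof.
rewrite clmulDl clmulNl clmul1l !clmul_clLv clmul1l /eichler !linearD /=.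
by rewrite clLvQP clLvQQ !(linear0, oppr0, addr0) addrK.
Qed.

Lemma clstar_eichler : clstar eichler = eichler_inv.
Proof. by rewrite linearD /= clstar1 clstar_clLv2 clLvQP. Qed.

Lemma eichler_even : cl_even eichler.
Proof.
have one_even (S : {set 'I_(n + n)}) : odd #|S| = true -> one S = 0.
  by rewrite ffunE; case: eqP => // ->; rewrite cards0.
move=> S oS; rewrite ffunE one_even // add0r.
exact: (clLv_parity _ (clLv_parity _ one_even)).
Qed.

Lemma eichler_conj (h : 'rV[R]_(n + n)) :
  clmul (clmul eichler (iota h)) eichler_inv =
  iota (h + qpolar Q h *: P - qpolar P h *: Q).
Proof.
(* Moving h to the front: PQh = hPQ - B(P,h) Q + B(Q,h) P. *)
have conj y : clLv P (clLv Q (clLv h y)) =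
    clLv h (clLv P (clLv Q y)) - qpolar P h *: clLv Q y + qpolar Q h *: clLv P y.
  by rewrite (clLv_swap Q h) linearB linearZ /= (clLv_swap P h) opprB addrC.
have Q_inv : clLv Q eichler_inv = clLv Q one.
  by rewrite linearB /= clLvQP clLvQQ !(linear0, oppr0, addr0).
have P_inv : clLv P eichler_inv = clLv P one.
  by rewrite linearB /= clLvPP subr0.
rewrite !iota_clLv clmulDl clmul1l !clmul_clLv clmul1l clmulDl !clmul_clLv clmul1l.
rewrite conj clLvPQ_eichler_inv Q_inv P_inv /eichler_inv linearB /=.
by rewrite !clLvD clLvN !clLvZ !addrA subrK addrAC.
Qed.

End EichlerElement.

Section EichlerMatrix.
Variables (R : comPzRingType) (n : nat).

Definition unip_mx (A : 'M[R]_n) : 'M[R]_(n + n) := block_mx 1%:M A 0 1%:M.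

Lemma unip_mxD (A C : 'M[R]_n) : unip_mx A *m unip_mx C = unip_mx (A + C).
Proof.
rewrite /unip_mx mulmx_block !mul1mx !mulmx1 !mul0mx !mulmx0 !addr0 !add0r.
by rewrite addrC.
Qed.

Lemma unip_mx0 : unip_mx 0 = 1%:M.
Proof. by rewrite /unip_mx [RHS]scalar_mx_block. Qed.

Lemma mul_row_unip_mx (p r : 'rV[R]_n) (A : 'M[R]_n) :
  row_mx p r *m unip_mx A = row_mx p (p *m A + r).
Proof. by rewrite /unip_mx mul_row_block !mulmx1 !mulmx0 !addr0. Qed.

Lemma EO_mul (g h : 'M[R]_(n + n)) : EO g -> EO h -> EO (g *m h).
Proof.
move=> Eg; elim=> [|h' i j c ij _ IH]; first by rewrite mulmx1.
by rewrite mulmxA; apply: EO_step.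
Qed.

Lemma EOgen_unip_mx (i j : 'I_n) c :
  EOgen (lshift n i) (rshift n j) c = unip_mx (c *: (delta_mx i j - delta_mx j i)).
Proof.
rewrite /EOgen /dd (unsplitK (inl i)) (unsplitK (inr j)).
apply/matrixP => a b; rewrite -(splitK a) -(splitK b).
case: (split a) => a'; case: (split b) => b'; rewrite /unip_mx /=
  ?block_mxEul ?block_mxEur ?block_mxEdl ?block_mxEdr !mxE
  ?(inj_eq (@lshift_inj _ _)) ?(inj_eq (@rshift_inj _ _)) ?eq_lrshift ?eq_rlshift /=.
all: by rewrite ?andbF ?subrr ?mulr0 ?addr0 ?add0r ?mxE.
Qed.

Lemma EO_unip_mx_skew (A : 'M[R]_n) : EO (unip_mx (A - A^T)).
Proof.
have EO_gen i j c : EO (unip_mx (c *: (delta_mx i j - delta_mx j i))).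
  rewrite -EOgen_unip_mx -[EOgen _ _ _]mul1mx.
  by apply: EO_step; [rewrite eq_lrshift | exact: EO_one].
have -> : A - A^T = \sum_i \sum_j A i j *: (delta_mx i j - delta_mx j i).
  rewrite {1}(matrix_sum_delta A) (matrix_sum_delta A^T) [X in _ - X]exchange_big.
  rewrite -sumrB; apply: eq_bigr => i _; rewrite -sumrB; apply: eq_bigr => j _.
  by rewrite mxE scalerBr.
have EO_0 : EO (unip_mx 0) by rewrite unip_mx0; exact: EO_one.
have EO_add B C : EO (unip_mx B) -> EO (unip_mx C) -> EO (unip_mx (B + C)).
  by move=> EB EC; rewrite -unip_mxD; apply: EO_mul.
apply: (big_ind _ EO_0 EO_add) => i _; apply: (big_ind _ EO_0 EO_add) => j _.
exact: EO_gen.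
Qed.

Definition eichler_mx (u w : 'rV[R]_n) : 'M[R]_(n + n) := unip_mx (w^T *m u - u^T *m w).

Lemma EO_eichler_mx u w : EO (eichler_mx u w).
Proof. by rewrite /eichler_mx -[u^T *m w]trmxK trmx_mul trmxK; exact: EO_unip_mx_skew. Qed.

Lemma eichler_mxNK u w : eichler_mx (- u) w *m eichler_mx u w = 1%:M.
Proof.
by rewrite unip_mxD mulmxN linearN /= mulNmx opprK addrACA addNr subrr addr0 unip_mx0.
Qed.

Lemma qform_row_mx (v w : 'rV[R]_n) : qform (row_mx v w) = (v *m w^T) 0 0.
Proof. by rewrite /qform row_mxKl row_mxKr. Qed.

Lemma qpolar_row0_mx (w p r : 'rV[R]_n) :
  qpolar (row_mx 0 w) (row_mx p r) = (p *m w^T) 0 0.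
Proof.
rewrite /qpolar add_row_mx add0r !qform_row_mx mul0mx linearD /= mulmxDr.
set pw := p *m w^T; set pr := p *m r^T.
by rewrite !mxE subr0 addrK.
Qed.

Lemma qform_row0_mx (w : 'rV[R]_n) : qform (row_mx 0 w) = 0.
Proof. by rewrite qform_row_mx mul0mx mxE. Qed.

Lemma eichler_mx_row (u v w : 'rV[R]_n) :
  qform (row_mx v w) = 1 -> (v *m u^T) 0 0 = 0 ->
  row_mx v w *m eichler_mx u w = row_mx v (w + u).
Proof.
rewrite qform_row_mx => vw vu; rewrite mul_row_unip_mx mulmxBr !mulmxA.
rewrite [v *m w^T]mx11_scalar [v *m u^T]mx11_scalar vw vu !mul_scalar_mx.
by rewrite scale1r scale0r subr0 addrC.
Qed.

Lemma eichler_transvection (u w : 'rV[R]_n) (h : 'rV[R]_(n + n)) :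
  h + qpolar (row_mx 0 w) h *: row_mx 0 u - qpolar (row_mx 0 u) h *: row_mx 0 w =
  h *m eichler_mx u w.
Proof.
rewrite -[h]hsubmxK mul_row_unip_mx !qpolar_row0_mx !scale_row_mx !scaler0.
rewrite opp_row_mx oppr0 !add_row_mx !addr0; congr row_mx.
by rewrite mulmxBr !mulmxA -!mul_scalar_mx -!mx11_scalar [RHS]addrC addrA.
Qed.

End EichlerMatrix.

Section EichlerEpin.
Variables (R : comPzRingType) (n : nat) (u w : 'rV[R]_n).
Local Notation P := (row_mx 0 u : 'rV[R]_(n + n)).
Local Notation Q := (row_mx 0 w : 'rV[R]_(n + n)).

Let qP : qform P = 0. Proof. exact: qform_row0_mx. Qed.
Let qQ : qform Q = 0. Proof. exact: qform_row0_mx. Qed.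
Let qPQ : qpolar P Q = 0. Proof. by rewrite qpolar_row0_mx mul0mx mxE. Qed.

Lemma eichler_conj_mx (h : 'rV[R]_(n + n)) :
  clmul (clmul (eichler P Q) (Defs.iota h)) (eichler_inv P Q) =
  Defs.iota (h *m eichler_mx u w).
Proof. by rewrite eichler_conj // eichler_transvection. Qed.

Lemma Epin_eichler : Epin_with_inv (eichler P Q) (eichler_inv P Q).
Proof.
split; last by exists (eichler_mx u w); [exact: EO_eichler_mx | exact: eichler_conj_mx].
split.
- exact: eichler_even.
- by rewrite clstar_eichler // eichlerK.
- by split; [exact: eichlerK | exact: eichler_invK].
- by move=> h; exists (h *m eichler_mx u w); rewrite eichler_conj_mx.
- move=> h'; exists (h' *m eichler_mx (- u) w).
  by rewrite eichler_conj_mx -mulmxA eichler_mxNK mulmx1.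
Qed.

End EichlerEpin.

Unset Implicit Arguments.
Set Strict Implicit.

Theorem theorem4p3 (R : comPzRingType) (n : nat) (v w1 w2 : 'rV[R]_n) :
  (3 <= n)%N ->
  qform (row_mx v w1) = 1 -> qform (row_mx v w2) = 1 ->
  EO_orbit (row_mx v w1) (row_mx v w2) /\ Epin_orbit (row_mx v w1) (row_mx v w2).
Proof.
move=> _ q1 q2; set u := w2 - w1.
have vu : (v *m u^T) 0 0 = 0.
  by rewrite linearB /= mulmxBr [LHS]mxE [X in _ + X]mxE -!qform_row_mx q1 q2 subrr.
have -> : row_mx v w2 = row_mx v w1 *m eichler_mx u w1.
  by rewrite eichler_mx_row // addrC subrK.
split; first by exists (eichler_mx u w1); first exact: EO_eichler_mx.
exists (eichler (row_mx 0 u) (row_mx 0 w1)), (eichler_inv (row_mx 0 u) (row_mx 0 w1)).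
by split; [exact: Epin_eichler | exact: eichler_conj_mx].
Qed.
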